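(* Let $(\mathfrak{n},J,\langle\cdot,\cdot\rangle)$ be a Hermitian Lie algebra with $\mathfrak{n}$ $2$-step nilpotent. Then $\langle\cdot,\cdot\rangle$ is pluriclosed if and only if $J$ is $2$-step and $$\langle[Jy,Jz],[w,u]\rangle-\langle[Ju,Jz],[w,y]\rangle+\langle[Ju,Jy],[w,z]\rangle+\langle[Jw,Jz],[u,y]\rangle-\langle[Jw,Jy],[u,z]\rangle+\langle[Jw,Ju],[y,z]\rangle=0$$ for all $w,u,y,z\in\mathfrak{n}$. In particular, if $J$ is abelian, let $\mathfrak{z}$ be the center, $\mathfrak{v}=\mathfrak{z}^\perp$ and $j:\mathfrak{z}\to\operatorname{End}(\mathfrak{v})$ defined by $\langle j(x)v,w\rangle=\langle x,[v,w]\rangle$ for $x\in\mathfrak{z}$, $v,w\in\mathfrak{v}$; then $\langle\cdot,\cdot\rangle$ is pluriclosed if and only if $j([u,y])z+j([y,z])u+j([z,u])y=0$ for all $u,y,z\in\mathfrak{v}$.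
   Context: A complex structure on a real Lie algebra $\mathfrak{g}$ is a linear map $J$ with $J^2=-I$ and $N_J(x,y)=[x,y]+J([Jx,y]+[x,Jy])-[Jx,Jy]=0$; it is abelian if $[Jx,Jy]=[x,y]$ for all $x,y$. Define $\mathfrak{a}_0(J)=0$, $\mathfrak{a}_\ell(J)=\{x: [x,\mathfrak{g}]\subset\mathfrak{a}_{\ell-1}(J),\ [Jx,\mathfrak{g}]\subset\mathfrak{a}_{\ell-1}(J)\}$; $J$ is $t$-step if $t$ is the least integer with $\mathfrak{a}_t(J)=\mathfrak{g}$. A Hermitian Lie algebra is $(\mathfrak{g},J,\langle\cdot,\cdot\rangle)$ with $\langle Jx,Jy\rangle=\langle x,y\rangle$. Torsion 3-form: $c(x,y,z)=-\langle[Jx,Jy],z\rangle-\langle[Jy,Jz],x\rangle-\langle[Jz,Jx],y\rangle$; $\langle\cdot,\cdot\rangle$ is pluriclosed if $dc=0$ for the Chevalley–Eilenberg differential $d$. $\mathfrak{n}$ is $2$-step nilpotent if non-abelian with $[\mathfrak{n},\mathfrak{n}]$ central. *)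

From HB Require Import structures.
From mathcomp Require Import all_boot all_order all_algebra.
From mathcomp Require Import reals.
Set Implicit Arguments. Unset Strict Implicit. Unset Printing Implicit Defensive.
Import Order.TTheory GRing.Theory Num.Theory.
Local Open Scope ring_scope.

Section Defs.
Variables (R : realType) (V : vectType R).

Definition lie_algebra (br : V -> V -> V) : Prop :=
  [/\ (forall (a : R) x y z, br (a *: x + y) z = a *: br x z + br y z),
      (forall (a : R) x y z, br z (a *: x + y) = a *: br z x + br z y),
      (forall x, br x x = 0) &
      (forall x y z, br x (br y z) + br y (br z x) + br z (br x y) = 0)].

Definition complex_structure (br : V -> V -> V) (J : V -> V) : Prop :=
  [/\ (forall (a : R) x y, J (a *: x + y) = a *: J x + J y),
   (forall x, J (J x) = - x) &
  (forall x y, br x y + J (br (J x) y + br x (J y)) - br (J x) (J y) = 0)].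

Definition abelian_cs (br : V -> V -> V) (J : V -> V) : Prop :=
  forall x y, br (J x) (J y) = br x y.

Fixpoint a_seq (br : V -> V -> V) (J : V -> V) (l : nat) (x : V) : Prop :=
  match l with
  | 0 => x = 0
  | l'.+1 => forall y, a_seq br J l' (br x y) /\ a_seq br J l' (br (J x) y)
  end.

Definition is_t_step (br : V -> V -> V) (J : V -> V) (t : nat) : Prop :=
  (forall x, a_seq br J t x) /\ (forall s, (s < t)%N -> ~ (forall x, a_seq br J s x)).

Definition inner_product (ip : V -> V -> R) : Prop :=
  [/\ (forall x y, ip x y = ip y x),
      (forall (a : R) x y z, ip (a *: x + y) z = a * ip x z + ip y z) &
      (forall x, x != 0 -> 0 < ip x x)].

Definition hermitian_structure (J : V -> V) (ip : V -> V -> R) : Prop :=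
  inner_product ip /\ (forall x y, ip (J x) (J y) = ip x y).

Definition two_step_nilpotent (br : V -> V -> V) : Prop :=
  (exists x y, br x y != 0) /\ (forall x y z, br (br x y) z = 0).

Definition torsion (br : V -> V -> V) (J : V -> V) (ip : V -> V -> R)
  (x y z : V) : R :=
  - ip (br (J x) (J y)) z - ip (br (J y) (J z)) x - ip (br (J z) (J x)) y.

(* Chevalley–Eilenberg differential of a 3-form c:
   dc(x0,x1,x2,x3) = sum_{i<j} (-1)^(i+j) c([xi,xj], x0,..,^xi,..,^xj,..,x3). *)
Definition CE_d3 (br : V -> V -> V) (c : V -> V -> V -> R) (x0 x1 x2 x3 : V) : R :=
    c (br x0 x1) x2 x3 - c (br x0 x2) x1 x3 + c (br x0 x3) x1 x2
  + c (br x1 x2) x0 x3 - c (br x1 x3) x0 x2 + c (br x2 x3) x0 x1.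

Definition pluriclosed (br : V -> V -> V) (J : V -> V) (ip : V -> V -> R) : Prop :=
  forall x0 x1 x2 x3, CE_d3 br (torsion br J ip) x0 x1 x2 x3 = 0.

Definition in_center (br : V -> V -> V) (x : V) : Prop := forall y, br x y = 0.
Definition in_v (br : V -> V -> V) (ip : V -> V -> R) (v : V) : Prop :=
  forall x, in_center br x -> ip x v = 0.

Definition j_map_spec (br : V -> V -> V) (ip : V -> V -> R) (jm : V -> V -> V) : Prop :=
  forall x v, in_center br x -> in_v br ip v ->
    in_v br ip (jm x v) /\
    (forall w, in_v br ip w -> ip (jm x v) w = ip x (br v w)).

End Defs.

From HB Require Import structures.
From mathcomp Require Import all_boot all_order all_algebra.
From mathcomp Require Import reals.
From mathcomp Require Import lra zify.
From Stdlib Require Import Classical.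
Import Order.TTheory GRing.Theory Num.Theory.
Local Open Scope ring_scope.

(* Let e be central.  Evaluating dc = 0 at (J a, y, b, J y) for central a, b
   gives 2 <[J a, y], [J b, y]> = <[J [J a, y], y], b>.  Applied to the chain
   f1 = [J e, y], f2 = [J f1, y], f3 = [J f2, y] of central elements this yields
   2 |f2|^2 = <f3, f1> and 2 <f1, f3> = |f2|^2, so f2 = 0, and then
   2 |f1|^2 = <f2, e> = 0.  Hence a pluriclosed metric forces [J z, n] = 0 for
   the center z, which for 2-step nilpotent n says exactly that J is 2-step.
   Once [J [n, n], n] = 0, the torsion of a central argument collapses and dc
   becomes minus the six-term expression.  For abelian J that expression only
   involves brackets, so it depends only on the components in v = z^perp, and
   there it equals -2 <j([u,y])z + j([y,z])u + j([z,u])y, w>. *)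

Section InnerProduct.
Context {R : realType} {V : vectType R} {ip : V -> V -> R}.
Hypothesis ip_inner : inner_product ip.

Lemma ipC x y : ip x y = ip y x.
Proof. by case: ip_inner. Qed.

Lemma ipDl x y z : ip (x + y) z = ip x z + ip y z.
Proof. by case: ip_inner => _ H _; rewrite -{1}[x]scale1r H mul1r. Qed.

Lemma ip0l z : ip 0 z = 0.
Proof. by apply: (addrI (ip 0 z)); rewrite -ipDl !addr0. Qed.

Lemma ipZl a x z : ip (a *: x) z = a * ip x z.
Proof. by case: ip_inner => _ H _; rewrite -[a *: x]addr0 H ip0l addr0. Qed.

Lemma ipNl x z : ip (- x) z = - ip x z.
Proof. by rewrite -scaleN1r ipZl mulN1r. Qed.

Lemma ipDr x y z : ip z (x + y) = ip z x + ip z y.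
Proof. by rewrite ipC ipDl !(ipC z). Qed.

Lemma ip0r z : ip z 0 = 0.
Proof. by rewrite ipC ip0l. Qed.

Lemma ipZr a x z : ip z (a *: x) = a * ip z x.
Proof. by rewrite ipC ipZl ipC. Qed.

Lemma ipNr x z : ip z (- x) = - ip z x.
Proof. by rewrite ipC ipNl ipC. Qed.

Lemma ip_eq0 x : ip x x = 0 -> x = 0.
Proof.
case: ip_inner => _ _ H x0; have [//|/H] := eqVneq x 0.
by rewrite x0 ltxx.
Qed.

Lemma memv_span_ind (P : V -> Prop) :
  P 0 -> (forall x y, P x -> P y -> P (x + y)) -> (forall a x, P x -> P (a *: x)) ->
  forall s, (forall i, i \in s -> P i) -> forall w, w \in <<s>>%VS -> P w.
Proof.
move=> P0 PD PZ; elim=> [|a s IH] Ps w; first by rewrite span_nil memv0 => /eqP ->.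
rewrite span_cons => /memv_addP [_ /vlineP [k ->] [v v_s ->]].
apply: PD; first by apply/PZ/Ps; rewrite mem_head.
by apply: IH v_s => i i_s; apply: Ps; rewrite in_cons i_s orbT.
Qed.

Lemma ip_span0 y s :
  (forall i, i \in s -> ip y i = 0) -> forall w, w \in <<s>>%VS -> ip y w = 0.
Proof.
apply: memv_span_ind => [|a b ya yb|a b yb]; by rewrite ?ip0r ?ipDr ?ipZr ?ya ?yb ?addr0 ?mulr0.
Qed.
Arguments ip_span0 {y s}.

Lemma orthogonal_projection_span s x :
  exists2 c, c \in <<s>>%VS & forall i, i \in s -> ip (x - c) i = 0.
Proof.
elim: s x => [|a s IH] x; first by exists 0; rewrite ?mem0v.
have [c1 c1_s x_c1] := IH x; have [c2 c2_s a_c2] := IH a.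
have sub : (<<s>> <= <<a :: s>>)%VS by rewrite span_cons addvSr.
have [/ip_eq0 /eqP|nz] := eqVneq (ip (a - c2) (a - c2)) 0.
  rewrite subr_eq0 => /eqP a_c2_eq; exists c1; first exact: subvP sub _ c1_s.
  move=> i; rewrite in_cons => /orP [/eqP -> | /x_c1 //].
  by rewrite a_c2_eq; apply: ip_span0 x_c1 _ c2_s.
(* Gram-Schmidt step: subtract from x - c1 its component along a - c2. *)
set a' := a - c2; set t := ip (x - c1) a' / ip a' a'.
have a'_c2 : ip a' c2 = 0 by apply: ip_span0 a_c2 _ c2_s.
have E i : ip (x - (c1 + t *: a')) i = ip (x - c1) i - t * ip a' i.
  by rewrite opprD addrA ipDl ipNl ipZl.
exists (c1 + t *: a').
  have a_span : a \in <<a :: s>>%VS by rewrite memv_span ?mem_head.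
  by rewrite rpredD ?rpredZ ?rpredB ?(subvP sub _ c1_s) ?(subvP sub _ c2_s).
move=> i; rewrite in_cons => /orP [/eqP -> | i_s]; last by rewrite E x_c1 // a_c2 // mulr0 subr0.
have -> : a = a' + c2 by rewrite subrK.
by rewrite ipDr !E (ip_span0 x_c1 _ c2_s) a'_c2 mulr0 !subr0 addr0 mulfVK ?subrr.
Qed.

End InnerProduct.

Section Subspace.
Context {R : realType} {V : vectType R} (P : V -> Prop).
Hypotheses (P0 : P 0) (PD : forall x y, P x -> P y -> P (x + y))
  (PZ : forall a x, P x -> P (a *: x)).

Lemma span_grow s : ~ (forall w, P w -> w \in <<s>>%VS) ->
  exists2 w, P w & (\dim <<s>> < \dim <<w :: s>>)%N.
Proof.
move=> /not_all_ex_not [w /(imply_to_and (P w)) [Pw w_s]]; exists w => //.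
rewrite (ltn_leqif (dimv_leqif_sup _)) ?span_cons ?addvSr //.
by rewrite subv_add -memvE negb_and; apply/orP; left; apply/negP.
Qed.

Lemma subspace_seq_span :
  exists s, (forall i, i \in s -> P i) /\ forall w, P w -> w \in <<s>>%VS.
Proof.
suff: forall n s, (forall i, i \in s -> P i) -> (\dim {:V} - \dim <<s>> <= n)%N ->
  exists s', (forall i, i \in s' -> P i) /\ forall w, P w -> w \in <<s'>>%VS.
  by move/(_ (\dim {:V}) [::]); apply; rewrite ?leq_subr.
elim=> [|n IH] s Ps codim_s;
  have [spans|/span_grow [w Pw grow]] := classic (forall w, P w -> w \in <<s>>%VS);
  try by exists s.
- by have := dimvS (subvf <<w :: s>>); lia.
- apply: (IH (w :: s)); last by have := dimvS (subvf <<w :: s>>); lia.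
  by move=> i; rewrite in_cons => /orP [/eqP -> | /Ps].
Qed.

Lemma orthogonal_decomposition (ip : V -> V -> R) : inner_product ip ->
  forall x, exists c, P c /\ forall z, P z -> ip z (x - c) = 0.
Proof.
move=> ip_inner x; have [s [Ps s_span]] := subspace_seq_span.
have [c c_s xc_s] := orthogonal_projection_span ip_inner s x.
exists c; split; first exact: memv_span_ind c_s.
by move=> z /s_span z_s; rewrite ipC //; apply: ip_span0 xc_s _ z_s.
Qed.

End Subspace.

Section LieBracket.
Context {R : realType} {V : vectType R} {br : V -> V -> V}.
Hypothesis br_lie : lie_algebra br.

Lemma brDl x y z : br (x + y) z = br x z + br y z.
Proof. by case: br_lie => H _ _ _; rewrite -{1}[x]scale1r H scale1r. Qed.

Lemma brDr x y z : br z (x + y) = br z x + br z y.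
Proof. by case: br_lie => _ H _ _; rewrite -{1}[x]scale1r H scale1r. Qed.

Lemma br0l z : br 0 z = 0.
Proof. by apply: (addrI (br 0 z)); rewrite -brDl !addr0. Qed.

Lemma br0r z : br z 0 = 0.
Proof. by apply: (addrI (br z 0)); rewrite -brDr !addr0. Qed.

Lemma brZl a x z : br (a *: x) z = a *: br x z.
Proof. by case: br_lie => H _ _ _; rewrite -[a *: x]addr0 H br0l addr0. Qed.

Lemma brNl x z : br (- x) z = - br x z.
Proof. by rewrite -scaleN1r brZl scaleN1r. Qed.

Lemma brNr x z : br z (- x) = - br z x.
Proof. by case: br_lie => _ H _ _; rewrite -[- x]addr0 -scaleN1r H br0r addr0 scaleN1r. Qed.

Lemma br_skew x y : br y x = - br x y.
Proof.
case: br_lie => _ _ brxx _; have := brxx (x + y).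
by rewrite brDl !brDr !brxx add0r addr0 addrC => /eqP; rewrite addr_eq0 => /eqP.
Qed.

Lemma center_brr e : in_center br e -> forall x, br x e = 0.
Proof. by move=> ce x; rewrite br_skew ce oppr0. Qed.

End LieBracket.

Section ComplexStructure.
Context {R : realType} {V : vectType R} {br : V -> V -> V} {J : V -> V}.
Hypothesis J_cs : complex_structure br J.

Lemma JD x y : J (x + y) = J x + J y.
Proof. by case: J_cs => H _ _; rewrite -{1}[x]scale1r H scale1r. Qed.

Lemma J0 : J 0 = 0.
Proof. by apply: (addrI (J 0)); rewrite -JD !addr0. Qed.

Lemma JJ x : J (J x) = - x.
Proof. by case: J_cs. Qed.

Lemma center_brJ e x : in_center br e -> br (J e) (J x) = J (br (J e) x).
Proof.
case: J_cs => _ _ NJ ce; have := NJ e x.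
by rewrite ce (ce (J x)) add0r addr0 => /eqP; rewrite subr_eq0 => /eqP.
Qed.

End ComplexStructure.

Section TwoStepNilpotent.
Context {R : realType} {V : vectType R} {br : V -> V -> V} {J : V -> V} {ip : V -> V -> R}.
Hypotheses (br_lie : lie_algebra br) (J_cs : complex_structure br J)
  (J_herm : hermitian_structure J ip) (br_nil : two_step_nilpotent br).

Let ip_inner : inner_product ip := J_herm.1.

Lemma br_center x y : in_center br (br x y).
Proof. by case: br_nil => _ brbr z; apply: brbr. Qed.

Lemma ipJ x y : ip (J x) (J y) = ip x y.
Proof. exact: J_herm.2. Qed.

Definition J_commutator_central := forall x y z, br (J (br x y)) z = 0.

Lemma is_t_step2P : is_t_step br J 2 <-> J_commutator_central.
Proof.
split=> [[a2 _] x y z | Jc]; first exact: ((a2 x y).1 z).2.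
split=> [x y /=|]; first by split=> z; split; rewrite ?br_center ?Jc.
case: br_nil => [[x [y xy_neq0]] _] [|[|//]] _ all_a; move: xy_neq0.
  by rewrite (all_a (br x y)) eqxx.
by rewrite ((all_a x) y).1 eqxx.
Qed.

Lemma pluriclosed_central_pair a b y : pluriclosed br J ip ->
  in_center br a -> in_center br b ->
  2 * ip (br (J a) y) (br (J b) y) = ip (br (J (br (J a) y)) y) b.
Proof.
move=> pc ca cb; have := pc (J a) y b (J y).
rewrite /CE_d3 /torsion ?(ca, cb, center_brr br_lie _ ca, center_brr br_lie _ cb,
  center_brr br_lie _ (br_center _ _), br_center, center_brJ J_cs _ _ ca,
  center_brJ J_cs _ _ cb, center_brJ J_cs _ _ (br_center _ _), JJ J_cs, J0 J_cs,
  br0l br_lie, br0r br_lie, brNl br_lie, brNr br_lie, oppr0, opprK).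
rewrite (br_skew br_lie (J b)) (br_skew br_lie (J _) y) center_brJ //.
rewrite ?(ipNl ip_inner, ipNr ip_inner, ip0l ip_inner, ip0r ip_inner, ipJ, opprK).
rewrite (ipC ip_inner (br (J b) y)).
lra.
Qed.

Lemma pluriclosed_J_center e y : pluriclosed br J ip -> in_center br e -> br (J e) y = 0.
Proof.
move=> pc ce; set f1 := br (J e) y; set f2 := br (J f1) y; set f3 := br (J f2) y.
have c1 : in_center br f1 by apply: br_center.
have c2 : in_center br f2 by apply: br_center.
have h11 := pluriclosed_central_pair _ _ y pc c1 c1.
have he2 := pluriclosed_central_pair _ _ y pc ce c2.
have hee := pluriclosed_central_pair _ _ y pc ce ce.
rewrite -/f1 -/f2 -/f3 (ipC ip_inner f3) in h11 he2 hee.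
have f2_0 : f2 = 0 by apply: (ip_eq0 ip_inner); lra.
by apply: (ip_eq0 ip_inner); rewrite f2_0 (ip0l ip_inner) in hee; lra.
Qed.

Lemma pluriclosed_J_commutator_central : pluriclosed br J ip -> J_commutator_central.
Proof. by move=> pc x y z; apply/pluriclosed_J_center/br_center. Qed.

Definition pluriclosed_form w u y z :=
  ip (br (J y) (J z)) (br w u) - ip (br (J u) (J z)) (br w y)
  + ip (br (J u) (J y)) (br w z) + ip (br (J w) (J z)) (br u y)
  - ip (br (J w) (J y)) (br u z) + ip (br (J w) (J u)) (br y z).

Lemma CE_d3_torsion : J_commutator_central ->
  forall w u y z, CE_d3 br (torsion br J ip) w u y z = - pluriclosed_form w u y z.
Proof.
move=> Jc w u y z.
have torsion_br x x' a b : torsion br J ip (br x x') a b = - ip (br (J a) (J b)) (br x x').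
  by rewrite /torsion Jc (br_skew br_lie (J (br x x'))) Jc oppr0 !(ip0l ip_inner); lra.
rewrite /CE_d3 !torsion_br /pluriclosed_form; lra.
Qed.

Lemma pluriclosedE : pluriclosed br J ip <->
  is_t_step br J 2 /\ forall w u y z, pluriclosed_form w u y z = 0.
Proof.
rewrite is_t_step2P; split=> [pc | [Jc form0] w u y z].
  have Jc := pluriclosed_J_commutator_central pc.
  by split=> // w u y z; apply: oppr_inj; rewrite -CE_d3_torsion // pc oppr0.
by rewrite CE_d3_torsion // form0 oppr0.
Qed.

Section Abelian.
Hypothesis J_ab : abelian_cs br J.

Lemma abelian_J_commutator_central : J_commutator_central.
Proof. by move=> x y z; rewrite -J_ab (JJ J_cs) (brNl br_lie) br_center oppr0. Qed.

Definition bracket_form w u y z :=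
  ip (br y z) (br w u) - ip (br u z) (br w y) + ip (br u y) (br w z)
  + ip (br w z) (br u y) - ip (br w y) (br u z) + ip (br w u) (br y z).

Lemma pluriclosed_form_abelian w u y z : pluriclosed_form w u y z = bracket_form w u y z.
Proof. by rewrite /pluriclosed_form /bracket_form !J_ab. Qed.

Lemma bracket_form_center_shift w u y z cw cu cy cz :
  in_center br cw -> in_center br cu -> in_center br cy -> in_center br cz ->
  bracket_form (w - cw) (u - cu) (y - cy) (z - cz) = bracket_form w u y z.
Proof.
have shift a b ca cb : in_center br ca -> in_center br cb -> br (a - ca) (b - cb) = br a b.
  move=> cca ccb; rewrite (brDl br_lie) !(brDr br_lie) !(brNl br_lie) !(brNr br_lie).
  by rewrite (center_brr br_lie _ ccb) !cca !oppr0 !addr0.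
by move=> ccw ccu ccy ccz; rewrite /bracket_form !shift.
Qed.

Variable jm : V -> V -> V.
Hypothesis jm_spec : j_map_spec br ip jm.

Lemma jm_in_v a b v : in_v br ip v -> in_v br ip (jm (br a b) v).
Proof. by move=> vv; case: (jm_spec _ _ (br_center a b) vv). Qed.

Lemma ip_jm a b v w : in_v br ip v -> in_v br ip w ->
  ip (jm (br a b) v) w = ip (br a b) (br v w).
Proof. by move=> vv; case: (jm_spec _ _ (br_center a b) vv) => _; apply. Qed.

Definition j_cyclic u y z := jm (br u y) z + jm (br y z) u + jm (br z u) y.

Lemma j_cyclic_in_v u y z : in_v br ip u -> in_v br ip y -> in_v br ip z ->
  in_v br ip (j_cyclic u y z).
Proof.
move=> vu vy vz x cx.
by rewrite /j_cyclic !(ipDr ip_inner) !jm_in_v // !addr0.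
Qed.

Lemma bracket_form_j_cyclic w u y z :
  in_v br ip w -> in_v br ip u -> in_v br ip y -> in_v br ip z ->
  bracket_form w u y z = - 2 * ip (j_cyclic u y z) w.
Proof.
move=> vw vu vy vz; rewrite /j_cyclic !(ipDl ip_inner).
rewrite !ip_jm // /bracket_form.
rewrite (br_skew br_lie w z) (br_skew br_lie w u) (br_skew br_lie w y) (br_skew br_lie u z).
rewrite !(ipNl ip_inner, ipNr ip_inner) (ipC ip_inner (br w z)) (ipC ip_inner (br w y)).
rewrite (ipC ip_inner (br w u)); lra.
Qed.

Lemma pluriclosed_abelianE : pluriclosed br J ip <->
  forall u y z, in_v br ip u -> in_v br ip y -> in_v br ip z -> j_cyclic u y z = 0.
Proof.
split=> [pc u y z vu vy vz | j_cyclic0 w u y z].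
  have form0 := (pluriclosedE.1 pc).2 (j_cyclic u y z) u y z.
  have vT := j_cyclic_in_v _ _ _ vu vy vz.
  rewrite pluriclosed_form_abelian bracket_form_j_cyclic // in form0.
  by apply: (ip_eq0 ip_inner); lra.
have decompose x : exists c, in_center br c /\ in_v br ip (x - c).
  apply: orthogonal_decomposition ip_inner x => [a|x1 x2 c1 c2 a|k x1 c1 a].
  - exact: br0l.
  - by rewrite (brDl br_lie) c1 c2 addr0.
  - by rewrite (brZl br_lie) c1 scaler0.
have [cw [cw_c vw]] := decompose w; have [cu [cu_c vu]] := decompose u.
have [cy [cy_c vy]] := decompose y; have [cz [cz_c vz]] := decompose z.
rewrite (CE_d3_torsion abelian_J_commutator_central) pluriclosed_form_abelian.
rewrite -(bracket_form_center_shift w u y z _ _ _ _ cw_c cu_c cy_c cz_c).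
by rewrite bracket_form_j_cyclic // j_cyclic0 // (ip0l ip_inner) mulr0 oppr0.
Qed.

End Abelian.

End TwoStepNilpotent.

Theorem mainTheorem16 (R : realType) (V : vectType R) (br : V -> V -> V)
  (J : V -> V) (ip : V -> V -> R) :
  lie_algebra br -> complex_structure br J -> hermitian_structure J ip ->
  two_step_nilpotent br ->
  (pluriclosed br J ip <->
     (is_t_step br J 2 /\
      forall w u y z : V,
        ip (br (J y) (J z)) (br w u) - ip (br (J u) (J z)) (br w y)
      + ip (br (J u) (J y)) (br w z) + ip (br (J w) (J z)) (br u y)
      - ip (br (J w) (J y)) (br u z) + ip (br (J w) (J u)) (br y z) = 0))
  /\
  (abelian_cs br J ->
   forall jm : V -> V -> V, j_map_spec br ip jm ->
   (pluriclosed br J ip <->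
      forall u y z : V, in_v br ip u -> in_v br ip y -> in_v br ip z ->
        jm (br u y) z + jm (br y z) u + jm (br z u) y = 0)).
Proof.
move=> br_lie J_cs J_herm br_nil; split.
  exact: pluriclosedE.
by move=> J_ab jm jm_spec; exact: pluriclosed_abelianE.
Qed.
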